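(* Let $\mathcal{Q}=\left(\frac{\lambda,\ \mu}{F}\right)$ be a generalized quaternion algebra and let $A,B\in\mathcal{Q}$ be invertible quaternions that do not commute. If $A,B$ is a matching pair (i.e. $\mathrm{tr}(A)=N(A)\neq 0$ and $A\cdot B=0$), then $A,B$ satisfy the fundamental equation $$A^{-1}B^{-1}AB-BA^{-1}B^{-1}A=B^{-1}AB-A.$$ If moreover $\mathcal{Q}$ is anisotropic, then conversely every pair of invertible, non-commuting $A,B\in\mathcal{Q}$ satisfying the fundamental equation is a matching pair; i.e. in the anisotropic case being a matching pair is necessary and sufficient.
   Context: $F$ is a field of characteristic not $2$, and $\lambda,\mu\in F$ are nonzero. The generalized quaternion algebra $\left(\frac{\lambda,\ \mu}{F}\right)$ is the $4$-dimensional associative $F$-algebra with basis $1,i,j,k$ and relations $i^2=\lambda$, $j^2=\mu$, $ij=-ji=k$. For $A=a_0+a_1i+a_2j+a_3k$ the conjugate is $\overline{A}=a_0-a_1i-a_2j-a_3k$, the norm is $N(A)=A\overline{A}=a_0^2-\lambda a_1^2-\mu a_2^2+\lambda\mu a_3^2\in F$, and the trace is $\mathrm{tr}(A)=A+\overline{A}=2a_0$. The bilinear form is $A\cdot B=\tfrac12(A\overline{B}+B\overline{A})=a_0b_0-\lambda a_1b_1-\mu a_2b_2+\lambda\mu a_3b_3$. A nonzero element $X$ is isotropic if $N(X)=0$; the algebra is anisotropic if it has no isotropic elements. A quaternion $A$ is balanced if $\mathrm{tr}(A)=N(A)\neq 0$; a pair of invertible non-commuting quaternions $A,B$ is a matching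 pair if $A$ is balanced and $A\cdot B=0$. *)

From HB Require Import structures.
From mathcomp Require Import all_boot all_order all_algebra.
Set Implicit Arguments. Unset Strict Implicit. Unset Printing Implicit Defensive.
Import GRing.Theory.
Local Open Scope ring_scope.

(* a0 + a1 i + a2 j + a3 k *)
Record quat (F : Type) := Quat { q0 : F; q1 : F; q2 : F; q3 : F }.

Section Quaternions.
Variables (F : fieldType) (l m : F).

Definition qzero : quat F := Quat 0 0 0 0.
Definition qone : quat F := Quat 1 0 0 0.

Definition qadd (A B : quat F) : quat F :=
  Quat (q0 A + q0 B) (q1 A + q1 B) (q2 A + q2 B) (q3 A + q3 B).
Definition qopp (A : quat F) : quat F := Quat (- q0 A) (- q1 A) (- q2 A) (- q3 A).
Definition qsub (A B : quat F) : quat F := qadd A (qopp B).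
Definition qscale (c : F) (A : quat F) : quat F :=
  Quat (c * q0 A) (c * q1 A) (c * q2 A) (c * q3 A).

(* multiplication from i^2 = l, j^2 = m, ij = -ji = k *)
Definition qmul (A B : quat F) : quat F :=
  Quat (q0 A * q0 B + l * q1 A * q1 B + m * q2 A * q2 B - l * m * q3 A * q3 B)
       (q0 A * q1 B + q1 A * q0 B - m * q2 A * q3 B + m * q3 A * q2 B)
       (q0 A * q2 B + q2 A * q0 B + l * q1 A * q3 B - l * q3 A * q1 B)
       (q0 A * q3 B + q3 A * q0 B + q1 A * q2 B - q2 A * q1 B).

Definition qconj (A : quat F) : quat F := Quat (q0 A) (- q1 A) (- q2 A) (- q3 A).

Definition qnorm (A : quat F) : F :=
  q0 A ^+ 2 - l * q1 A ^+ 2 - m * q2 A ^+ 2 + l * m * q3 A ^+ 2.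

Definition qtrace (A : quat F) : F := 2%:R * q0 A.

Definition qdot (A B : quat F) : F :=
  q0 A * q0 B - l * q1 A * q1 B - m * q2 A * q2 B + l * m * q3 A * q3 B.

Definition qinvertible (A : quat F) : Prop :=
  exists C, qmul A C = qone /\ qmul C A = qone.

Definition qinv (A : quat F) : quat F := qscale (qnorm A)^-1 (qconj A).

Definition qcommute (A B : quat F) : Prop := qmul A B = qmul B A.

Definition isotropic (X : quat F) : Prop := X <> qzero /\ qnorm X = 0.
Definition anisotropic : Prop := forall X, ~ isotropic X.

Definition balanced (A : quat F) : Prop := qtrace A = qnorm A /\ qnorm A <> 0.

Definition matching_pair (A B : quat F) : Prop :=
  [/\ qinvertible A, qinvertible B, ~ qcommute A B, balanced A & qdot A B = 0].

Definition fundamental_eq (A B : quat F) : Prop :=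
  qsub (qmul (qmul (qmul (qinv A) (qinv B)) A) B)
       (qmul (qmul (qmul B (qinv A)) (qinv B)) A)
  = qsub (qmul (qmul (qinv B) A) B) A.

End Quaternions.

(** Write N for the norm, ¯ for conjugation and D = AB - BA.  Clearing the
    denominators N(A), N(B) of the inverses turns the defect of the fundamental
    equation into a product:
      N(A) N(B) (lhs - rhs) = ((tr A - N A) B̄ - 2 (A·B)) D.
    For a matching pair the left factor vanishes.  In the anisotropic case the
    norm is multiplicative and has no nontrivial zeros, so there are no zero
    divisors; D ≠ 0 because A, B do not commute, hence the left factor vanishes.
    If tr A ≠ N A this forces B to be a scalar, which commutes with A; so
    tr A = N A, and the scalar part of the left factor then gives A·B = 0. *)
From mathcomp Require Import all_boot all_order all_algebra.
From mathcomp Require Import ring.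
Set Implicit Arguments. Unset Strict Implicit.
Import GRing.Theory.
Local Open Scope ring_scope.

Ltac qunfold := cbv [qmul qsub qadd qopp qscale qconj qzero qone q0 q1 q2 q3].

Section QuaternionAlgebra.
Variables (F : fieldType) (l m : F).

Local Notation qmul := (qmul l m).
Local Notation qnorm := (qnorm l m).
Local Notation qdot := (qdot l m).
Local Notation qinv := (qinv l m).

Lemma qnormM (A B : quat F) : qnorm (qmul A B) = qnorm A * qnorm B.
Proof. by case: A B => [a0 a1 a2 a3] [b0 b1 b2 b3]; rewrite /qnorm; qunfold; ring. Qed.

Lemma qnorm0 : qnorm (qzero F) = 0.
Proof. by rewrite /qnorm; qunfold; ring. Qed.

Lemma qnorm1 : qnorm (qone F) = 1.
Proof. by rewrite /qnorm; qunfold; ring. Qed.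

Lemma qinvertible_norm_neq0 (A : quat F) : qinvertible l m A -> qnorm A != 0.
Proof.
case=> C [AC1 _]; apply/eqP => NA0.
by move: (qnormM A C); rewrite AC1 NA0 mul0r qnorm1; apply/eqP; rewrite oner_eq0.
Qed.

Lemma qmulZl c (X Y : quat F) : qmul (qscale c X) Y = qscale c (qmul X Y).
Proof. by case: X Y => [? ? ? ?] [? ? ? ?]; qunfold; congr Quat; ring. Qed.

Lemma qmulZr c (X Y : quat F) : qmul X (qscale c Y) = qscale c (qmul X Y).
Proof. by case: X Y => [? ? ? ?] [? ? ? ?]; qunfold; congr Quat; ring. Qed.

Lemma qscaleA c d (X : quat F) : qscale c (qscale d X) = qscale (c * d) X.
Proof. by case: X => ? ? ? ?; qunfold; congr Quat; ring. Qed.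

Lemma qmul0l (X : quat F) : qmul (qzero F) X = qzero F.
Proof. by case: X => ? ? ? ?; qunfold; congr Quat; ring. Qed.

Lemma qsubrr (X : quat F) : qsub X X = qzero F.
Proof. by case: X => ? ? ? ?; qunfold; congr Quat; ring. Qed.

Lemma qsub_eq0 (X Y : quat F) : (qsub X Y = qzero F) <-> X = Y.
Proof.
split; last by move->; exact: qsubrr.
case: X Y => [x0 x1 x2 x3] [y0 y1 y2 y3]; qunfold.
by case=> /eqP + /eqP + /eqP + /eqP; rewrite !subr_eq0 => /eqP-> /eqP-> /eqP-> /eqP->.
Qed.

Lemma qscale_eq0 c (X : quat F) : c != 0 -> qscale c X = qzero F -> X = qzero F.
Proof.
move=> c0; case: X => x0 x1 x2 x3; qunfold.
by case=> /eqP + /eqP + /eqP + /eqP; rewrite !mulf_eq0 (negbTE c0) => /eqP-> /eqP-> /eqP-> /eqP->.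
Qed.

Lemma qzeroP (X : quat F) : X = qzero F \/ X <> qzero F.
Proof.
case: X => x0 x1 x2 x3.
have [/and4P[/eqP-> /eqP-> /eqP-> /eqP->]|nz] :=
  boolP [&& x0 == 0, x1 == 0, x2 == 0 & x3 == 0]; first by left.
by right; case=> e0 e1 e2 e3; move: nz; rewrite e0 e1 e2 e3 !eqxx.
Qed.

Definition qcommutator (A B : quat F) : quat F := qsub (qmul A B) (qmul B A).

Lemma qcommutator_eq0 (A B : quat F) : qcommutator A B = qzero F <-> qcommute l m A B.
Proof. exact: qsub_eq0. Qed.

Lemma scalar_qcommute (A : quat F) b : qcommute l m A (Quat b 0 0 0).
Proof. by case: A => ? ? ? ?; rewrite /qcommute; qunfold; congr Quat; ring. Qed.

Definition fundamental_defect (A B : quat F) : quat F :=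
  qsub (qsub (qmul (qmul (qmul (qinv A) (qinv B)) A) B)
             (qmul (qmul (qmul B (qinv A)) (qinv B)) A))
       (qsub (qmul (qmul (qinv B) A) B) A).

Lemma fundamental_eqE (A B : quat F) :
  fundamental_eq l m A B <-> fundamental_defect A B = qzero F.
Proof. by rewrite /fundamental_defect qsub_eq0. Qed.

Definition matching_factor (A B : quat F) : quat F :=
  qsub (qscale (qtrace A - qnorm A) (qconj B)) (Quat (2%:R * qdot A B) 0 0 0).

Lemma matching_factor_conj_identity (A B : quat F) :
  qsub (qsub (qsub (qmul (qmul (qmul (qconj A) (qconj B)) A) B)
                   (qmul (qmul (qmul B (qconj A)) (qconj B)) A))
             (qscale (qnorm A) (qmul (qmul (qconj B) A) B)))
       (qscale (- (qnorm A * qnorm B)) A)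
  = qmul (matching_factor A B) (qcommutator A B).
Proof.
case: A B => [a0 a1 a2 a3] [b0 b1 b2 b3].
by rewrite /matching_factor /qcommutator /qnorm /qtrace /qdot; qunfold; congr Quat; ring.
Qed.

Lemma fundamental_defect_factor (A B : quat F) : qnorm A != 0 -> qnorm B != 0 ->
  qscale (qnorm A * qnorm B) (fundamental_defect A B)
  = qmul (matching_factor A B) (qcommutator A B).
Proof.
move=> NA0 NB0; rewrite -matching_factor_conj_identity /fundamental_defect /qinv.
rewrite !(qmulZl, qmulZr, qscaleA).
(* only the scalars remain to be cancelled, so the products can be made opaque *)
move: (qmul _ _) (qmul (qmul _ _) _) (qmul (qmul _ _) _) NA0 NB0.
move: (qnorm A) (qnorm B) => a b [x0 x1 x2 x3] [y0 y1 y2 y3] [z0 z1 z2 z3] NA0 NB0.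
by case: A => a0 a1 a2 a3; qunfold; congr Quat; field; rewrite NA0 NB0.
Qed.

Lemma fundamental_eq_factor (A B : quat F) : qnorm A != 0 -> qnorm B != 0 ->
  fundamental_eq l m A B <-> qmul (matching_factor A B) (qcommutator A B) = qzero F.
Proof.
move=> NA0 NB0; rewrite fundamental_eqE -fundamental_defect_factor //; split.
  by move->; qunfold; rewrite !mulr0.
by apply: qscale_eq0; rewrite mulf_neq0.
Qed.

Lemma matching_factor_balanced (A B : quat F) :
  qtrace A = qnorm A -> qdot A B = 0 -> matching_factor A B = qzero F.
Proof.
move=> trA dotAB; rewrite /matching_factor trA dotAB subrr.
by case: B {dotAB} => *; qunfold; congr Quat; ring.
Qed.

Lemma matching_factor_eq0 (A B : quat F) : (2%:R : F) != 0 -> ~ qcommute l m A B ->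
  matching_factor A B = qzero F -> qtrace A = qnorm A /\ qdot A B = 0.
Proof.
move=> two0 ncAB; case: B ncAB => b0 b1 b2 b3 ncAB.
have [trA|trA] := eqVneq (qtrace A - qnorm A) 0.
  rewrite /matching_factor trA; qunfold; case=> /eqP.
  rewrite mul0r sub0r oppr_eq0 mulf_eq0 (negbTE two0) => /eqP dotAB.
  by split=> //; apply/eqP; rewrite -subr_eq0 trA.
(* a nonzero multiple of the conjugate of B is a scalar, so B is one *)
rewrite /matching_factor; qunfold; case=> _ /eqP + /eqP + /eqP.
rewrite !subr0 !mulf_eq0 !oppr_eq0 (negbTE trA) /= => /eqP b1_0 /eqP b2_0 /eqP b3_0.
by case: ncAB; rewrite b1_0 b2_0 b3_0; apply: scalar_qcommute.
Qed.

Section Anisotropic.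
Hypothesis anisoF : anisotropic l m.

Lemma anisotropic_norm_eq0 (X : quat F) : qnorm X = 0 -> X = qzero F.
Proof. by move=> NX0; case: (qzeroP X) => // nzX; case: (anisoF (conj nzX NX0)). Qed.

Lemma anisotropic_mul_eq0 (X Y : quat F) :
  qmul X Y = qzero F -> X = qzero F \/ Y = qzero F.
Proof.
move=> /(congr1 qnorm); rewrite qnormM qnorm0 => /eqP.
by rewrite mulf_eq0 => /orP[] /eqP /anisotropic_norm_eq0; [left|right].
Qed.

End Anisotropic.

End QuaternionAlgebra.

Theorem theorem4p4 (F : fieldType) (l m : F)
  (hchar : (2%:R : F) != 0) (hl : l != 0) (hm : m != 0) :
  (forall A B : quat F,
     qinvertible l m A -> qinvertible l m B -> ~ qcommute l m A B ->
     matching_pair l m A B -> fundamental_eq l m A B) /\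
  (anisotropic l m ->
   forall A B : quat F,
     qinvertible l m A -> qinvertible l m B -> ~ qcommute l m A B ->
     fundamental_eq l m A B -> matching_pair l m A B).
Proof.
split=> [A B invA invB _ [_ _ _ [trA _] dotAB] | anisoF A B invA invB ncAB].
  apply/fundamental_eq_factor; try exact: qinvertible_norm_neq0.
  by rewrite matching_factor_balanced // qmul0l.
move/fundamental_eq_factor => /(_ (qinvertible_norm_neq0 invA)).
move=> /(_ (qinvertible_norm_neq0 invB)) /(anisotropic_mul_eq0 anisoF).
rewrite qcommutator_eq0 => -[/(matching_factor_eq0 hchar ncAB)[trA dotAB] | //].
by split=> //; split=> //; apply/eqP; exact: qinvertible_norm_neq0.
Qed.
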